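(* Let $N$ be a positive integer. Let $\pi: A\to B$ be a surjective map between nonempty finite sets and let $\mathfrak s$ be a section of $\pi$. Let $\mu$ and $\rho$ be two probability measures on $\{0,1,\dots,N\}^A$. Assume that $\mu$ is a $\pi$-lift and that the following two conditions hold: (A) Let $Z$ be a $\rho$-distributed random variable. For every $b\in B$, let $W_b:=(Z_c : c\in A,\ \pi(c)\neq b)$. For every $b\in B$, every $a\in\pi^{-1}(\{b\})$ and every event $H\in \sigma(W_b)$ of positive probability, the conditional distribution of $Z_{\mathfrak s(b)}$ given $H$ is stochastically dominated by the conditional distribution of $Z_a$ given $H$. (B) Let $Y$ be a $\mu$-distributed random variable, let $X_b:=\max_{a\in \pi^{-1}(\{b\})}Y_a$ for $b\in B$, and let $Y'_a:=X_{\pi(a)}\,\mathbf{1}_{\mathfrak s(\pi(a))=a}$ for $a\in A$. Then the distribution of $Y'$ is stochastically dominated by $\rho$. Then $\mu$ is stochastically dominated by $\rho$.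
   Context: $\{0,1,\dots,N\}^A$ carries the product order. A section of $\pi$ is a map $s:B\to A$ with $\pi\circ s=\mathrm{id}_B$. A probability measure $\mu$ on $\{0,\dots,N\}^A$ is a $\pi$-lift if for $\mu$-almost every $x$, for every $b\in B$, at most one $a\in\pi^{-1}(\{b\})$ satisfies $x_a\neq0$. Stochastic domination of $\mu$ by $\nu$ means there exist $X\sim\mu$, $Y\sim\nu$ on a common probability space with $X\le Y$ almost surely. *)

From HB Require Import structures.
From mathcomp Require Import all_boot all_order all_algebra.
From mathcomp Require Import reals.
Set Implicit Arguments. Unset Strict Implicit. Unset Printing Implicit Defensive.
Import Order.TTheory GRing.Theory Num.Theory.
Local Open Scope ring_scope.

Definition is_prob {R : realType} {T : finType} (p : {ffun T -> R}) : Prop :=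
  (forall x, 0 <= p x) /\ \sum_(x : T) p x = 1.

(* Stochastic domination of mu by nu w.r.t. an order le on a finite type:
   existence of a coupling (a joint law of (X,Y), i.e. X ~ mu, Y ~ nu on a
   common probability space) supported on {le X Y}. *)
Definition stoch_dom {R : realType} {T : finType} (le : rel T)
    (mu nu : {ffun T -> R}) : Prop :=
  exists q : {ffun T * T -> R},
    [/\ forall z, 0 <= q z,
        forall x, \sum_(y : T) q (x, y) = mu x,
        forall y, \sum_(x : T) q (x, y) = nu y &
        forall x y, 0 < q (x, y) -> le x y].

Definition config (N : nat) (A : finType) := {ffun A -> 'I_N.+1}.
Definition le_ord (N : nat) : rel 'I_N.+1 := fun i j => (i <= j)%N.
Definition le_config (N : nat) (A : finType) : rel (config N A) :=
  fun x y => [forall a, (x a <= y a)%N].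

Definition prob_of {R : realType} {T : finType} (p : {ffun T -> R})
  (H : {pred T}) : R := \sum_(x | x \in H) p x.

Definition pushforward {R : realType} {T U : finType} (p : {ffun T -> R})
  (f : T -> U) : {ffun U -> R} := [ffun u => \sum_(x | f x == u) p x].

Definition cond_law {R : realType} {T U : finType} (p : {ffun T -> R})
  (H : {pred T}) (f : T -> U) : {ffun U -> R} :=
  [ffun u => (\sum_(x | (x \in H) && (f x == u)) p x) / prob_of p H].

(* H belongs to sigma(W_b), W_b = (Z_c : pi c != b): membership in H only
   depends on the coordinates outside pi^{-1}(b). *)
Definition measurable_outside (N : nat) (A B : finType) (pi : A -> B) (b : B)
  (H : {pred config N A}) : Prop :=
  forall x y : config N A, (forall c, pi c != b -> x c = y c) ->
    (x \in H) = (y \in H).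

Definition is_pi_lift {R : realType} (N : nat) (A B : finType) (pi : A -> B)
  (mu : {ffun config N A -> R}) : Prop :=
  forall x : config N A, 0 < mu x ->
    forall a a' : A, pi a = pi a' -> x a != ord0 -> x a' != ord0 -> a = a'.

Definition block_max (N : nat) (A B : finType) (pi : A -> B)
  (y : config N A) (b : B) : 'I_N.+1 :=
  inord (\max_(a | pi a == b) (y a : nat)).

Definition compress (N : nat) (A B : finType) (pi : A -> B) (s : B -> A)
  (y : config N A) : config N A :=
  [ffun a => if s (pi a) == a then block_max pi y (pi a) else ord0].

From HB Require Import structures.
From mathcomp Require Import all_boot all_order all_algebra.
From mathcomp Require Import reals.
Set Implicit Arguments. Unset Strict Implicit. Unset Printing Implicit Defensive.
Import Order.TTheory GRing.Theory Num.Theory.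
Local Open Scope ring_scope.

(* Domination of mu by rho amounts, by Strassen's theorem, to the bounds
   mu(U) <= rho(U) for all up-sets U; on a finite space Strassen's theorem
   follows from Hall's condition, by moving as much mass as possible along
   an edge and splitting the problem along a set that becomes tight.
   Fix an up-set U and compress the blocks pi^{-1}(b) one at a time onto the
   sites s b.  Since mu-almost every configuration has at most one nonzero
   site per block, compressing one more block b maps the event {y in U}
   into the event that block b can be decompressed back into U, and by (A),
   applied on the atoms of sigma(W_b), that event has rho-mass at most
   rho(U).  Once every block is compressed, (B) bounds the mass by rho(U). *)

Lemma bigmin_attained (d : Order.disp_t) (X : orderType d) (I : finType)
    (P : pred I) (F : I -> X) (x : X) :
  let m := \big[Order.min/x]_(i | P i) F i in m = x \/ exists2 i, P i & m = F i.
Proof.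
apply: (big_rec (fun m => m = x \/ exists2 i, P i & m = F i)); first by left.
by move=> i m Pi IHm; case: (leP (F i) m) => _ //; right; exists i.
Qed.

Section PointMass.
Variables (V : nmodType) (T : finType).

Definition point_mass (x0 : T) (e : V) : {ffun T -> V} :=
  [ffun x => e *+ (x == x0)].

Lemma sum_point_mass (P : pred T) (x0 : T) (e : V) :
  \sum_(x | P x) point_mass x0 e x = e *+ P x0.
Proof.
rewrite big_mkcond (bigD1 x0) //= big1 ?addr0 => [|x /negbTE x_neq].
  by rewrite ffunE eqxx mulrb; case: (P x0).
by rewrite ffunE x_neq if_same.
Qed.

End PointMass.

Section Couplings.
Variables (R : realType) (T : finType) (r : rel T).
Implicit Types (mu nu : {ffun T -> R}).

Lemma stoch_dom0 : stoch_dom r (0 : {ffun T -> R}) 0.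
Proof.
exists 0; split=> [z|x|y|x y]; rewrite ?ffunE ?ltxx //.
- by rewrite big1 // => y _; rewrite ffunE.
- by rewrite big1 // => x _; rewrite ffunE.
Qed.

Lemma stoch_domD mu1 nu1 mu2 nu2 :
  stoch_dom r mu1 nu1 -> stoch_dom r mu2 nu2 ->
  stoch_dom r (mu1 + mu2) (nu1 + nu2).
Proof.
move=> [q1 [q1_ge0 q1_mu q1_nu q1_r]] [q2 [q2_ge0 q2_mu q2_nu q2_r]].
exists (q1 + q2); split=> [z|x|y|x y].
- by rewrite ffunE addr_ge0.
- by under eq_bigr do rewrite ffunE; rewrite big_split /= q1_mu q2_mu ffunE.
- by under eq_bigr do rewrite ffunE; rewrite big_split /= q1_nu q2_nu ffunE.
rewrite ffunE; have [/q1_r //|q1_le0] := ltP 0 (q1 (x, y)).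
have [/q2_r //|q2_le0] := ltP 0 (q2 (x, y)).
by rewrite ltNge (le_trans (lerD q1_le0 q2_le0)) ?addr0.
Qed.

Lemma stoch_dom_point_mass x0 y0 (e : R) :
  r x0 y0 -> 0 <= e -> stoch_dom r (point_mass x0 e) (point_mass y0 e).
Proof.
move=> r_x0y0 e_ge0; exists (point_mass (x0, y0) e); split=> [z|x|y|x y].
- by rewrite ffunE mulrn_wge0.
- under eq_bigr do rewrite ffunE xpair_eqE.
  rewrite ffunE; case: (x == x0); last by rewrite big1.
  by rewrite -[RHS](sum_point_mass xpredT y0); apply: eq_bigr => y _; rewrite ffunE.
- under eq_bigr do rewrite ffunE xpair_eqE andbC.
  rewrite ffunE; case: (y == y0); last by rewrite big1.
  by rewrite -[RHS](sum_point_mass xpredT x0); apply: eq_bigr => x _; rewrite ffunE.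
by rewrite ffunE xpair_eqE; case: andP => [[/eqP-> /eqP->]|]; rewrite ?ltxx.
Qed.

End Couplings.

Lemma proper_card_addn (T : finType) (A A' B B' : {pred T}) :
  A' \subset A -> B' \subset B -> (A' \proper A) || (B' \proper B) ->
  (#|A'| + #|B'| < #|A| + #|B|)%N.
Proof.
move=> /subset_leq_card sA /subset_leq_card sB /orP[] /proper_card lt.
  by rewrite -addSn leq_add.
by rewrite -addnS leq_add.
Qed.

Section Sums.
Variables (R : realType) (T : finType).
Implicit Types (f : {ffun T -> R}) (A B : {set T}).

Lemma ler_sum_subpred (P Q : pred T) f :
  (forall x, 0 <= f x) -> (forall x, P x -> f x != 0 -> Q x) ->
  \sum_(x | P x) f x <= \sum_(x | Q x) f x.
Proof.
move=> f_ge0 PQ; rewrite [X in X <= _]big_mkcond [X in _ <= X]big_mkcond.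
apply: ler_sum => x _; case: ifP => Px; case: ifP => Qx //.
by have /eqP-> : f x == 0 by apply: contraFT Qx; apply: PQ.
Qed.

Lemma ler_sum_subset A B f :
  (forall x, 0 <= f x) -> A \subset B -> \sum_(x in A) f x <= \sum_(x in B) f x.
Proof. by move=> f_ge0 /subsetP sAB; apply: ler_sum_subpred => // x /sAB. Qed.

Lemma sum_setUD A B f :
  \sum_(x in A :|: B) f x = \sum_(x in A :\: B) f x + \sum_(x in B) f x.
Proof. by rewrite (big_setID B) setIC setKU setDUl setDv setU0 addrC. Qed.

Lemma sum_setC A f : \sum_(x in ~: A) f x = \sum_x f x - \sum_(x in A) f x.
Proof.
rewrite (bigID (mem A) xpredT) /= addrC addrK.
by apply: eq_bigl => x; rewrite inE.
Qed.

Lemma sum_sub_point_mass (P : pred T) f x0 e :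
  \sum_(x | P x) (f - point_mass x0 e) x = \sum_(x | P x) f x - e *+ P x0.
Proof.
by rewrite -sum_point_mass -sumrB; apply: eq_bigr => x _; rewrite !ffunE.
Qed.

End Sums.

Section Hall.
Variables (R : realType) (T : finType) (r : rel T).
Implicit Types (mu nu f g : {ffun T -> R}) (S : {set T}).

Definition rel_image S : {set T} := [set y | [exists x in S, r x y]].

Lemma rel_imageS S1 S2 : S1 \subset S2 -> rel_image S1 \subset rel_image S2.
Proof.
move=> /subsetP sS12; apply/subsetP => y; rewrite !inE => /existsP[x /andP[xS rxy]].
by apply/existsP; exists x; rewrite sS12.
Qed.

Lemma rel_imageU S1 S2 : rel_image (S1 :|: S2) = rel_image S1 :|: rel_image S2.
Proof.
apply/setP => y; rewrite !inE; apply/existsP/orP => [[x]|[]/existsP[x]].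
- by rewrite inE => /andP[/orP[] xS rxy]; [left|right];
    apply/existsP; exists x; rewrite xS.
- by move=> /andP[xS rxy]; exists x; rewrite inE xS.
- by move=> /andP[xS rxy]; exists x; rewrite inE xS orbT.
Qed.

Definition hall_cond mu nu :=
  [/\ forall x, 0 <= mu x, forall y, 0 <= nu y,
      \sum_x mu x = \sum_y nu y &
      forall S, \sum_(x in S) mu x <= \sum_(y in rel_image S) nu y].

Definition slack mu nu S := \sum_(y in rel_image S) nu y - \sum_(x in S) mu x.

Definition restrict S f : {ffun T -> R} := [ffun x => if x \in S then f x else 0].

Lemma sum_restrict S' S f :
  \sum_(x in S') restrict S f x = \sum_(x in S' :&: S) f x.
Proof.
rewrite big_mkcond [RHS]big_mkcond; apply: eq_bigr => x _.
by rewrite ffunE inE; case: (x \in S'); case: (x \in S).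
Qed.

Lemma sum_restrictT S f : \sum_x restrict S f x = \sum_(x in S) f x.
Proof. by under eq_bigr do rewrite ffunE; rewrite -big_mkcond. Qed.

Lemma add_restrictC S f : restrict S f + restrict (~: S) f = f.
Proof.
by apply/ffunP => x; rewrite !ffunE inE; case: (x \in S); rewrite ?addr0 ?add0r.
Qed.

Lemma restrict_ge0 S f : (forall x, 0 <= f x) -> forall x, 0 <= restrict S f x.
Proof. by move=> f_ge0 x; rewrite ffunE; case: ifP. Qed.

Lemma hall_cond_restrict mu nu S :
  hall_cond mu nu -> slack mu nu S = 0 ->
  hall_cond (restrict S mu) (restrict (rel_image S) nu).
Proof.
move=> [mu_ge0 nu_ge0 _ hall] /eqP; rewrite subr_eq0 => /eqP tight.
split; rewrite ?sum_restrictT //; try exact: restrict_ge0.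
move=> S'; rewrite !sum_restrict; apply: le_trans (hall _) _.
by apply: ler_sum_subset; rewrite // subsetI !rel_imageS ?subsetIl ?subsetIr.
Qed.

Lemma hall_cond_restrictC mu nu S :
  hall_cond mu nu -> slack mu nu S = 0 ->
  hall_cond (restrict (~: S) mu) (restrict (~: rel_image S) nu).
Proof.
move=> [mu_ge0 nu_ge0 total hall] /eqP; rewrite subr_eq0 => /eqP tight.
split; rewrite ?sum_restrictT ?sum_setC ?total -?tight //; try exact: restrict_ge0.
move=> S'; rewrite !sum_restrict -!setDE.
rewrite -(lerD2r (\sum_(x in S) mu x)) -sum_setUD -tight.
by apply: le_trans (hall _) _; rewrite rel_imageU sum_setUD.
Qed.

Lemma hall_cond_null mu nu :
  hall_cond mu nu -> (forall x, mu x = 0) -> stoch_dom r mu nu.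
Proof.
move=> [_ nu_ge0 total _] mu0.
have mu_eq0 : mu = 0 by apply/ffunP => x; rewrite ffunE mu0.
have nu_eq0 : nu = 0.
  apply/ffunP => y; rewrite ffunE; apply: (psumr_eq0P (P := xpredT)) => //.
  by rewrite -total big1.
by rewrite mu_eq0 nu_eq0; exact: stoch_dom0.
Qed.

Lemma hall_cond_edge mu nu x0 :
  hall_cond mu nu -> mu x0 != 0 -> exists2 y0, r x0 y0 & nu y0 != 0.
Proof.
move=> [mu_ge0 _ _ hall] mu_x0.
have [y0 /andP[r_x0y0 nu_y0] | no_y0] := pickP (fun y => r x0 y && (nu y != 0)).
  by exists y0.
have := hall [set x0]; rewrite big_set1 big1 => [|y].
  by move=> mu_le0; case/eqP: mu_x0; apply/le_anti; rewrite mu_le0 mu_ge0.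
rewrite inE => /existsP[x /andP[]]; rewrite inE => /eqP-> r_x0y.
by move: (no_y0 y); rewrite r_x0y => /negbFE/eqP.
Qed.

(* The largest mass that can be moved along the edge (x0, y0) while
   preserving Hall's condition. *)
Definition max_transfer mu nu x0 y0 : R :=
  \big[Num.min/Num.min (mu x0) (nu y0)]_(S : {set T} |
    (x0 \notin S) && (y0 \in rel_image S)) slack mu nu S.

Lemma max_transfer_ge0 mu nu x0 y0 :
  hall_cond mu nu -> 0 <= max_transfer mu nu x0 y0.
Proof.
move=> [mu_ge0 nu_ge0 _ hall]; apply/bigmin_geP; split=> [|S _].
  by rewrite le_min mu_ge0 nu_ge0.
by rewrite subr_ge0 hall.
Qed.

Lemma max_transfer_attained mu nu x0 y0 :
  let e := max_transfer mu nu x0 y0 in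
  e = Num.min (mu x0) (nu y0) \/
  exists2 S : {set T}, (x0 \notin S) && (y0 \in rel_image S) & e = slack mu nu S.
Proof. exact: bigmin_attained. Qed.

Lemma hall_cond_transfer mu nu x0 y0 :
  hall_cond mu nu -> r x0 y0 ->
  let e := max_transfer mu nu x0 y0 in
  hall_cond (mu - point_mass x0 e) (nu - point_mass y0 e).
Proof.
move=> [mu_ge0 nu_ge0 total hall] r_x0y0 e.
have /bigmin_geP[] := lexx e; rewrite le_min => /andP[e_mu e_nu] e_slack.
split=> [x|y||S]; rewrite ?sum_sub_point_mass ?total //.
- by rewrite !ffunE; case: eqP => [->|_]; rewrite ?subr0 ?subr_ge0.
- by rewrite !ffunE; case: eqP => [->|_]; rewrite ?subr0 ?subr_ge0.
have [x0_in_S | x0_notin_S] := boolP (x0 \in S).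
  have y0_in_NS : y0 \in rel_image S.
    by rewrite inE; apply/existsP; exists x0; rewrite x0_in_S.
  by rewrite y0_in_NS lerD2r hall.
have [y0_in_NS | _] := boolP (y0 \in rel_image S); last by rewrite !subr0 hall.
by rewrite subr0 lerBrDr addrC -lerBrDr e_slack ?x0_notin_S.
Qed.

Lemma support_restrict S f : support (restrict S f) \subset support f.
Proof. by apply/subsetP => x; rewrite !inE ffunE; case: ifP; rewrite ?eqxx. Qed.

Lemma proper_support_restrict S f g x :
  support f \subset support g -> x \notin S -> g x != 0 ->
  support (restrict S f) \proper support g.
Proof.
move=> sfg x_notin_S g_x; apply/properP; split.
  exact: subset_trans (support_restrict S f) sfg.
by exists x; rewrite !inE ?ffunE ?(negbTE x_notin_S) ?eqxx.
Qed.

Lemma support_sub_point_mass f x0 e :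
  f x0 != 0 -> support (f - point_mass x0 e) \subset support f.
Proof.
move=> f_x0; apply/subsetP => x; rewrite !inE !ffunE mulrb.
by case: ifP => [/eqP-> //|_]; rewrite subr0.
Qed.

Theorem hall_stoch_dom mu nu : hall_cond mu nu -> stoch_dom r mu nu.
Proof.
have [n] := ubnP (#|support mu| + #|support nu|)%N.
elim: n mu nu => // n IH mu nu size_lt hmn.
have [x0 mu_x0 | mu0] := pickP (fun x => mu x != 0); last first.
  by apply: (hall_cond_null hmn) => x; apply/eqP/negbFE/mu0.
have [y0 r_x0y0 nu_y0] := hall_cond_edge hmn mu_x0.
have e_ge0 := max_transfer_ge0 x0 y0 hmn.
have hmn' := hall_cond_transfer hmn r_x0y0.
set e := max_transfer mu nu x0 y0 in e_ge0 hmn'.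
rewrite -(subrK (point_mass x0 e) mu) -(subrK (point_mass y0 e) nu).
apply: stoch_domD (stoch_dom_point_mass r_x0y0 e_ge0).
set mu' := mu - point_mass x0 e in hmn' *.
set nu' := nu - point_mass y0 e in hmn' *.
have sub_mu : support mu' \subset support mu := support_sub_point_mass e mu_x0.
have sub_nu : support nu' \subset support nu := support_sub_point_mass e nu_y0.
have IH' mu1 nu1 :
    support mu1 \subset support mu -> support nu1 \subset support nu ->
    (support mu1 \proper support mu) || (support nu1 \proper support nu) ->
    hall_cond mu1 nu1 -> stoch_dom r mu1 nu1.
  move=> s_mu s_nu proper; apply: IH.
  by rewrite -ltnS (leq_trans _ size_lt) // ltnS proper_card_addn.
(* Either x0 or y0 leaves the support, or some S becomes tight and the
   problem splits along S: x0 leaves the first part, y0 the second. *)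
have [e_min | [S /andP[x0_notin_S y0_in_NS] e_slack]] :=
  max_transfer_attained mu nu x0 y0.
- apply: IH' hmn' => //.
  case: (leP (mu x0) (nu y0)) e_min => _ e_min; apply/orP; [left|right];
    apply/properP; split => //; [exists x0 | exists y0];
    by rewrite // !inE !ffunE eqxx mulr1n /e e_min subrr eqxx.
- have tight : slack mu' nu' S = 0.
    rewrite /slack !sum_sub_point_mass y0_in_NS (negbTE x0_notin_S) subr0.
    by rewrite /e e_slack /slack subKr subrr.
  rewrite -(add_restrictC S mu') -(add_restrictC (rel_image S) nu').
  apply: stoch_domD; apply: IH'.
  + exact: subset_trans (support_restrict _ _) sub_mu.
  + exact: subset_trans (support_restrict _ _) sub_nu.
  + by rewrite (proper_support_restrict sub_mu x0_notin_S mu_x0).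
  + exact: hall_cond_restrict.
  + exact: subset_trans (support_restrict _ _) sub_mu.
  + exact: subset_trans (support_restrict _ _) sub_nu.
  + by rewrite (proper_support_restrict sub_nu _ nu_y0) ?orbT // inE negbK.
  + exact: hall_cond_restrictC.
Qed.

End Hall.

Section UpwardClosed.
Variables (R : realType) (T : finType) (le : rel T).
Implicit Types (mu nu : {ffun T -> R}) (U : {set T}).

Definition upward_closed U := forall x y, le x y -> x \in U -> y \in U.

Lemma stoch_dom_upward mu nu U :
  stoch_dom le mu nu -> upward_closed U ->
  \sum_(x in U) mu x <= \sum_(x in U) nu x.
Proof.
move=> [q [q_ge0 q_mu q_nu q_le]] U_up.
have mu_U x : x \in U -> mu x = \sum_(y in U) q (x, y).
  move=> xU; rewrite -q_mu [RHS]big_mkcond; apply: eq_bigr => y _.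
  case: ifP => // yU; apply/le_anti; rewrite q_ge0 andbT leNgt.
  by apply/negP => /q_le lxy; rewrite (U_up _ _ lxy xU) in yU.
rewrite (eq_bigr _ mu_U); under [X in _ <= X]eq_bigr do rewrite -q_nu.
rewrite [X in _ <= X]exchange_big [X in _ <= X](bigID (mem U)) /=.
by rewrite lerDl sumr_ge0 // => x _; rewrite sumr_ge0.
Qed.

Theorem upward_stoch_dom mu nu :
  reflexive le -> transitive le ->
  (forall x, 0 <= mu x) -> (forall y, 0 <= nu y) -> \sum_x mu x = \sum_y nu y ->
  (forall U, upward_closed U -> \sum_(x in U) mu x <= \sum_(x in U) nu x) ->
  stoch_dom le mu nu.
Proof.
move=> refl_le trans_le mu_ge0 nu_ge0 total mass_le.
apply: hall_stoch_dom; split=> // S; apply: le_trans (mass_le _ _).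
  apply: ler_sum_subset => //; apply/subsetP => x xS.
  by rewrite inE; apply/existsP; exists x; rewrite xS refl_le.
move=> y z le_yz; rewrite !inE => /existsP[x /andP[xS le_xy]].
by apply/existsP; exists x; rewrite xS (trans_le _ _ _ le_xy le_yz).
Qed.

End UpwardClosed.

Section Laws.
Variables (R : realType) (T U : finType) (p : {ffun T -> R}) (f : T -> U).

Lemma sum_pushforward (V : {set U}) :
  \sum_(u in V) pushforward p f u = \sum_(x | f x \in V) p x.
Proof.
under eq_bigr do rewrite ffunE.
rewrite [RHS](partition_big f (mem V)) //=.
apply: eq_bigr => u uV; apply: eq_bigl => x.
by case: eqP => [->|]; rewrite ?uV ?andbT ?andbF.
Qed.

Lemma sum_cond_law (H : {pred T}) (V : {set U}) :
  \sum_(u in V) cond_law p H f u =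
  (\sum_(x | (x \in H) && (f x \in V)) p x) / prob_of p H.
Proof.
under eq_bigr do rewrite ffunE.
rewrite -mulr_suml (partition_big f (mem V)) /=; last by move=> x /andP[].
congr (_ / _); apply: eq_bigr => u uV; apply: eq_bigl => x.
by case: eqP => [->|]; rewrite ?uV ?andbT ?andbF.
Qed.

End Laws.

Lemma cond_law_tail_le (R : realType) (T : finType) (N : nat)
    (p : {ffun T -> R}) (H : {pred T}) (f g : T -> 'I_N.+1) (t : nat) :
  (forall x, 0 <= p x) ->
  (0 < prob_of p H -> stoch_dom (@le_ord N) (cond_law p H f) (cond_law p H g)) ->
  \sum_(x | (x \in H) && (t <= f x)%N) p x <=
  \sum_(x | (x \in H) && (t <= g x)%N) p x.
Proof.
move=> p_ge0 dom; have [pH_gt0 | pH_le0] := ltP 0 (prob_of p H).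
  have tail_up : upward_closed (@le_ord N) [set i : 'I_N.+1 | (t <= i)%N].
    by move=> i j le_ij; rewrite !inE => /leq_trans; apply.
  move: (stoch_dom_upward (dom pH_gt0) tail_up).
  rewrite !sum_cond_law ler_pM2r ?invr_gt0 //.
  by under eq_bigl do rewrite inE; under [X in _ <= X -> _]eq_bigl do rewrite inE.
have pH0 : prob_of p H = 0 by apply/le_anti; rewrite pH_le0 sumr_ge0.
rewrite big1 ?sumr_ge0 // => x /andP[xH _].
exact: (psumr_eq0P (fun x _ => p_ge0 x) pH0).
Qed.

Section Configurations.
Variables (N : nat) (A B : finType) (pi : A -> B) (s : B -> A).
Hypothesis pi_s : cancel s pi.
Local Notation cfg := (config N A).
Local Notation le_cfg := (@le_config N A).
Implicit Types (x y z w : cfg) (U : {set cfg}) (C : {set B}).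

Lemma le_config_refl : reflexive le_cfg.
Proof. by move=> x; apply/forallP. Qed.

Lemma le_config_trans : transitive le_cfg.
Proof.
move=> y x z /forallP le_xy /forallP le_yz; apply/forallP => a.
exact: leq_trans (le_xy a) (le_yz a).
Qed.

Definition compress_on C y : cfg :=
  [ffun a => if pi a \in C then compress pi s y a else y a].

Lemma compress_on_set0 y : compress_on set0 y = y.
Proof. by apply/ffunP => a; rewrite ffunE in_set0. Qed.

Lemma compress_on_setT y : compress_on setT y = compress pi s y.
Proof. by apply/ffunP => a; rewrite ffunE in_setT. Qed.

Definition place (b : B) (a : A) (t : 'I_N.+1) w : cfg :=
  [ffun c => if pi c == b then (if c == a then t else ord0) else w c].

Definition off_block (b : B) z : cfg := [ffun c => if pi c == b then ord0 else z c].

(* The configurations whose block [b], compressed onto [s b], can be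
   decompressed onto a single site of the block so as to land in [U]. *)
Definition spread (b : B) U : {set cfg} :=
  [set x : cfg | [exists a, (pi a == b) && (place b a (x (s b)) x \in U)]].

Lemma place_off_block b a t x : place b a t (off_block b x) = place b a t x.
Proof. by apply/ffunP => c; rewrite !ffunE; case: (pi c == b). Qed.

Lemma place_le b a (t : 'I_N.+1) x :
  pi a = b -> (t <= x a)%N -> le_cfg (place b a t (off_block b x)) x.
Proof.
move=> pi_a t_le; apply/forallP => c; rewrite !ffunE.
by case: (pi c == b) => //; case: eqP => [->|].
Qed.

Lemma upward_closed_spread b U :
  upward_closed le_cfg U -> upward_closed le_cfg (spread b U).
Proof.
move=> U_up x y /forallP le_xy; rewrite !inE => /existsP[a /andP[pi_a xU]].
apply/existsP; exists a; rewrite pi_a; apply: U_up xU.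
by apply/forallP => c; rewrite !ffunE; case: ifP => _; [case: ifP|].
Qed.

Lemma block_max_attained y b :
  exists2 a, pi a = b &
    block_max pi y b = y a /\ forall c, pi c = b -> (y c <= y a)%N.
Proof.
have pi_sb : pi (s b) == b by rewrite pi_s.
have [a /eqP pi_a a_max] :=
  @arg_maxnP A (s b) (fun c => pi c == b) (fun c => nat_of_ord (y c)) pi_sb.
exists a => //; split=> [|c /eqP]; last exact: a_max.
rewrite /block_max (_ : \max_(c | pi c == b) (y c : nat) = y a) ?inord_val //.
apply/eqP; rewrite eqn_leq (@leq_bigmax_cond _ (fun c => pi c == b)) ?pi_a // andbT.
by apply/bigmax_leqP => c /a_max.
Qed.

Lemma compress_on_spread C b y U :
  (forall a a', pi a = pi a' -> y a != ord0 -> y a' != ord0 -> a = a') ->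
  b \notin C -> compress_on C y \in U -> compress_on (b |: C) y \in spread b U.
Proof.
move=> y_lift b_notin_C yU; have [a pi_a [max_a a_max]] := block_max_attained y b.
rewrite inE; apply/existsP; exists a; rewrite pi_a eqxx /=.
have -> : compress_on (b |: C) y (s b) = y a.
  by rewrite !ffunE pi_s setU11 eqxx max_a.
suff -> : place b a (y a) (compress_on (b |: C) y) = compress_on C y by [].
apply/ffunP => c; rewrite !ffunE in_setU1.
have [pi_c | pi_c] := eqVneq (pi c) b; last by [].
rewrite pi_c (negbTE b_notin_C); have [-> // | c_neq_a] := eqVneq c a.
apply/esym/eqP; apply: contraNT c_neq_a => y_c.
apply/eqP/y_lift => //; first by rewrite pi_c.
by rewrite -lt0n (leq_trans _ (a_max c pi_c)) // lt0n.
Qed.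

Section Masses.
Variables (R : realType) (rho : {ffun cfg -> R}).
Hypothesis rho_ge0 : forall x, 0 <= rho x.
Hypothesis cond_dom : forall (b : B) (a : A) (H : {pred cfg}),
  pi a = b -> measurable_outside pi b H -> 0 < prob_of rho H ->
  stoch_dom (@le_ord N) (cond_law rho H (fun z : cfg => z (s b)))
    (cond_law rho H (fun z : cfg => z a)).

(* On the fibre [off_block b x = w], an atom of sigma(W_b), let [t] be the
   least value at [s b] that decompresses into [U], at the site [a].  By (A)
   the tail [t <= x (s b)] weighs at most the tail [t <= x a], which lies
   in [U]. *)
Lemma spread_fiber_le b U w : upward_closed le_cfg U ->
  \sum_(x | (x \in spread b U) && (off_block b x == w)) rho x <=
  \sum_(x | (x \in U) && (off_block b x == w)) rho x.
Proof.
move=> U_up; pose good t := [exists a, (pi a == b) && (place b a t w \in U)].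
have spread_good x : x \in spread b U -> off_block b x == w -> good (x (s b)).
  rewrite inE => /existsP[a /andP[pi_a xU]] /eqP xw.
  by apply/existsP; exists a; rewrite pi_a -xw place_off_block.
have [t0 good_t0 | no_good] := pickP good; last first.
  rewrite big1 ?sumr_ge0 // => x /andP[x_spread /(spread_good _ x_spread)].
  by rewrite no_good.
have [t /existsP[a /andP[/eqP pi_a place_U]] t_min] :=
  arg_minnP (fun t : 'I_N.+1 => nat_of_ord t) good_t0.
pose H := [pred z | off_block b z == w].
have H_meas : measurable_outside pi b H.
  move=> x y eq_xy; rewrite !inE; congr (_ == w); apply/ffunP => c.
  by rewrite !ffunE; case: ifP => // /negbT /eq_xy.
apply: le_trans (le_trans _ (cond_law_tail_le t rho_ge0 (cond_dom pi_a H_meas))) _.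
  apply: ler_sum_subpred => // x /andP[x_spread xw] _.
  by rewrite inE xw t_min ?spread_good.
apply: ler_sum_subpred => // x /andP[/eqP xw t_le] _; rewrite xw eqxx andbT.
by apply: U_up (place_le pi_a t_le) _; rewrite xw.
Qed.

Lemma spread_mass_le b U :
  upward_closed le_cfg U -> \sum_(x in spread b U) rho x <= \sum_(x in U) rho x.
Proof.
move=> U_up; rewrite (partition_big (off_block b) xpredT) //.
rewrite [X in _ <= X](partition_big (off_block b) xpredT) //=.
by apply: ler_sum => w _; apply: spread_fiber_le.
Qed.

Variable mu : {ffun cfg -> R}.
Hypothesis mu_ge0 : forall y, 0 <= mu y.
Hypothesis mu_lift : is_pi_lift pi mu.
Hypothesis compress_dom : stoch_dom le_cfg (pushforward mu (compress pi s)) rho.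

Lemma compress_on_mass_le C U : upward_closed le_cfg U ->
  \sum_(y | compress_on C y \in U) mu y <= \sum_(x in U) rho x.
Proof.
have [n] := ubnP #|~: C|; elim: n C U => // n IH C U card_lt U_up.
have [C_full | [b]] := set_0Vmem (~: C).
  have -> : C = setT by rewrite -[C]setCK C_full setC0.
  under eq_bigl do rewrite compress_on_setT.
  by rewrite -sum_pushforward; apply: stoch_dom_upward compress_dom U_up.
rewrite in_setC => b_notin_C.
have card_lt' : (#|~: (b |: C)| < n)%N.
  rewrite -ltnS (leq_trans _ card_lt) // ltnS proper_card // properC.
  by apply/properP; split; [rewrite subsetUr | exists b; rewrite ?setU11].
apply: le_trans (spread_mass_le b U_up).
apply: le_trans (IH _ _ card_lt' (upward_closed_spread (b := b) U_up)).
apply: ler_sum_subpred => // y yU mu_y.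
apply: compress_on_spread => // a a'; apply: mu_lift.
by rewrite lt_def mu_y mu_ge0.
Qed.

End Masses.

End Configurations.

Theorem proposition2p13 (R : realType) (N : nat) (A B : finType)
  (pi : A -> B) (s : B -> A) (mu rho : {ffun config N A -> R}) :
  (0 < N)%N ->
  (0 < #|A|)%N -> (0 < #|B|)%N ->
  (forall b : B, exists a : A, pi a = b) ->
  (forall b : B, pi (s b) = b) ->
  is_prob mu -> is_prob rho ->
  is_pi_lift pi mu ->
  (* (A) *)
  (forall (b : B) (a : A) (H : {pred config N A}),
      pi a = b -> measurable_outside pi b H -> 0 < prob_of rho H ->
      stoch_dom (@le_ord N)
        (cond_law rho H (fun z : config N A => z (s b)))
        (cond_law rho H (fun z : config N A => z a))) ->
  (* (B) *)
  stoch_dom (@le_config N A) (pushforward mu (compress pi s)) rho ->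
  stoch_dom (@le_config N A) mu rho.
Proof.
move=> _ _ _ _ pi_s [mu_ge0 mu_total] [rho_ge0 rho_total] mu_lift cond_dom
  compress_dom.
apply: upward_stoch_dom => //; first exact: le_config_refl.
- exact: le_config_trans.
- by rewrite mu_total rho_total.
move=> U U_up.
have := compress_on_mass_le pi_s rho_ge0 cond_dom mu_ge0 mu_lift compress_dom
  set0 U_up.
by under eq_bigl do rewrite compress_on_set0.
Qed.
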